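(* Let $\mathcal N$ and $\mathcal M$ be quantum channels satisfying $s$-detailed balance with respect to $\rho_\beta$, with $\mathcal N$ having $\rho_\beta$ as unique fixed state and spectrum in $[0,1]$. Run the single-trajectory algorithm with initial state $\rho_\beta$ and $T_{burn}=0$, and let $v=\mathbb E_{\rho_\beta}(\mathcal M)$. Then for all integers $t,p>0$ with $t+p\le K$, $$\mathbb E_{\rho_\beta}\big[(e_t-v)(e_{t+p}-v)\big]=\sum_{j\ge2}\alpha_{1j}\alpha_{j1}\lambda_j^{p-1}.$$
   Context: $H$ is an $n$-qubit Hermitian operator, $\beta>0$, $\rho_\beta=e^{-\beta H}/\operatorname{tr}(e^{-\beta H})$. $\mathcal T^\dagger$ is the Hilbert–Schmidt adjoint of a linear map (for a channel with Kraus $K_u$, $\mathcal T^\dagger(X)=\sum_uK_u^\dagger XK_u$). $\langle A,B\rangle_s=\operatorname{tr}(A^\dagger\rho_\beta^{1-s}B\rho_\beta^s)$; a map satisfies $s$-detailed balance if $\langle A,\mathcal T^\dagger(B)\rangle_s=\langle\mathcal T^\dagger(A),B\rangle_s$ for all $A,B$. $\mathcal M$ has Kraus operators $\{O_u\}_u$ indexed by finitely many real outcomes $u$. $\mathbb E_{\rho_\beta}(\mathcal M)=\sum_uu\operatorname{tr}(O_u\rho_\beta O_u^\dagger)$, $\widehat{\mathcal M}(X)=\sum_u(u-\mathbb E_{\rho_\beta}(\mathcal M))O_uXO_u^\dagger$, $\mathcal E=\mathcal M\circ\mathcal N\circ\mathcal M$, $\widehat{\mathcal E}=\mathcal M\circ\mathcal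 N\circ\widehat{\mathcal M}$. $\{Y_i\}_i$ is a $\langle\cdot,\cdot\rangle_s$-orthonormal basis of matrices with $\mathcal E^\dagger(Y_i)=\lambda_iY_i$, $1=\lambda_1>\lambda_2\ge\dots\ge0$, $Y_1=I$; $\alpha_{ij}=\langle Y_j,\widehat{\mathcal E}^\dagger(Y_i)\rangle_s$. Single-trajectory algorithm: starting from the given initial state, apply $\mathcal N$ $T_{burn}$ times, then for $t=1,\dots,K$ apply $\mathcal M$ (record outcome $e_t$), then $\mathcal N$, then $\mathcal M$ (outcome discarded). $\mathbb E_{\rho_\beta}$ is expectation over this process started from $\rho_\beta$. *)

From mathcomp Require Import all_boot all_order all_algebra.
From mathcomp Require Import all_classical all_reals all_analysis.
From mathcomp Require Import complex.
Set Implicit Arguments.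
Unset Strict Implicit.
Unset Printing Implicit Defensive.
Import Order.TTheory GRing.Theory Num.Theory numFieldNormedType.Exports.
Local Open Scope ring_scope.
Local Open Scope complex_scope.

Section QDefs.
Variable R : realType.

Definition qdim (n : nat) : nat := (2 ^ n)%N.

Lemma qdim2_gt0 n : (0 < qdim n * qdim n)%N.
Proof. by rewrite muln_gt0 /qdim expn_gt0. Qed.

(* first index (the paper's index 1) of the eigenbasis *)
Definition idx0 n : 'I_(qdim n * qdim n) := Ordinal (qdim2_gt0 n).

Variable d : nat.
Notation mx := 'M[R[i]]_d.

Definition mxadj (p q : nat) (A : 'M[R[i]]_(p, q)) : 'M[R[i]]_(q, p) :=
  \matrix_(i, j) (A j i)^*.

Definition mxpow (A : mx) (k : nat) : mx := iter k (mulmx A) 1%:M.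

Definition expm (A : mx) : mx :=
  \matrix_(i, j)
    (limn (fun N : nat =>
       (((\sum_(k < N) (k`!%:R)^-1 *: mxpow A k) i j) : (R[i])^o)) : R[i]).

Definition herm_mx (A : mx) : Prop := mxadj A = A.

Definition psd (A : mx) : Prop :=
  herm_mx A /\ forall v : 'cV[R[i]]_d, 0 <= (mxadj v *m A *m v) 0 0.

Definition density (A : mx) : Prop := psd A /\ \tr A = 1.

Definition gibbsZ (H : mx) (beta : R) : R[i] := \tr (expm (- beta%:C *: H)).

Definition gibbs (H : mx) (beta : R) : mx := (gibbsZ H beta)^-1 *: expm (- beta%:C *: H).

Definition gibbs_pow (H : mx) (beta s : R) : mx :=
  ((powR (complex.Re (gibbsZ H beta)) s)^-1)%:C *: expm (- (s * beta)%:C *: H).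

Definition ip_s (H : mx) (beta s : R) (A B : mx) : R[i] :=
  \tr (mxadj A *m gibbs_pow H beta (1 - s) *m B *m gibbs_pow H beta s).

Definition kraus (a : nat) (K : 'I_a -> mx) (X : mx) : mx :=
  \sum_(u < a) (K u *m X *m mxadj (K u)).
Definition kraus_adj (a : nat) (K : 'I_a -> mx) (X : mx) : mx :=
  \sum_(u < a) (mxadj (K u) *m X *m K u).

Definition trace_preserving (a : nat) (K : 'I_a -> mx) : Prop :=
  \sum_(u < a) (mxadj (K u) *m K u) = 1%:M.

Definition detailed_balance (H : mx) (beta s : R) (Tadj : mx -> mx) : Prop :=
  forall A B : mx, ip_s H beta s A (Tadj B) = ip_s H beta s (Tadj A) B.

Definition expM (m : nat) (O : 'I_m -> mx) (lab : 'I_m -> R) (rho : mx) : R[i] :=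
  \sum_(u < m) (lab u)%:C * \tr (O u *m rho *m mxadj (O u)).

(* adjoint of  Mhat(X) = sum_u (u - v) O_u X O_u^dag *)
Definition Mhat_adj (m : nat) (O : 'I_m -> mx) (lab : 'I_m -> R) (v : R[i]) (X : mx) : mx :=
  \sum_(u < m) (((lab u)%:C - v)^* *: (mxadj (O u) *m X *m O u)).

(* one round of the single-trajectory algorithm with recorded outcome e:
   M (outcome e), then N, then M (outcome discarded); unnormalized state *)
Definition traj_step (a m : nat) (KN : 'I_a -> mx) (O : 'I_m -> mx) (e : 'I_m) (X : mx) : mx :=
  kraus O (kraus KN (O e *m X *m mxadj (O e))).

Definition traj (a m : nat) (KN : 'I_a -> mx) (O : 'I_m -> mx) (es : seq 'I_m) (X : mx) : mx :=
  foldl (fun Y e => traj_step KN O e Y) X es.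

(* E[(e_t - v)(e_{t+p} - v)] over the outcome record (e_1..e_K), T_burn = 0,
   started from rho; probability of a record es is tr(traj es rho) *)
Definition corr (a m : nat) (KN : 'I_a -> mx) (O : 'I_m -> mx) (lab : 'I_m -> R)
    (rho : mx) (v : R[i]) (K t p : nat) : R[i] :=
  \sum_(f : {ffun 'I_K -> 'I_m})
    let es := [seq f i | i <- enum 'I_K] in
    let ls := [seq lab e | e <- es] in
    ((nth 0 ls t.-1)%:C - v) * ((nth 0 ls (t + p).-1)%:C - v) * \tr (traj KN O es rho).

End QDefs.

From HB Require Import structures.
From mathcomp Require Import all_boot all_order all_algebra.
From mathcomp Require Import all_classical all_reals all_analysis.
From mathcomp Require Import complex zify.
Set Implicit Arguments.
Unset Strict Implicit.
Unset Printing Implicit Defensive.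
Import Order.TTheory GRing.Theory Num.Theory numFieldNormedType.Exports.
Local Open Scope ring_scope.
Local Open Scope complex_scope.

(* Write the probability of an outcome record e_1 .. e_K as the trace of the
   composite of the round maps X |-> M(N(O_e X O_e^dag)).  Summing over all
   records, the sum factorises round by round: an unweighted round contributes
   E = M N M and a round weighted by (e - v) contributes Ehat = M N Mhat.  As
   rho_beta is fixed by M (detailed balance) and by N, and E preserves traces,
   the correlation is tr (Ehat E^(p-1) Ehat rho_beta).  In the Heisenberg
   picture this is <I, Ehat^dag (E^dag)^(p-1) Ehat^dag I>_s; expanding
   Ehat^dag I = sum_j alpha_1j Y_j in the eigenbasis of E^dag gives
   sum_j alpha_1j lambda_j^(p-1) alpha_j1, whose j = 1 term vanishes since
   alpha_11 = tr (rho_beta Mhat^dag I) = v - v. *)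

Lemma prod_pred2_if (I : finType) (T : comPzSemiRingType) i1 i2 (F : I -> T) :
  i1 != i2 -> \prod_i (if (i == i1) || (i == i2) then F i else 1) = F i1 * F i2.
Proof.
move=> i12; rewrite -big_mkcond (bigD1 i1) ?eqxx //= (bigD1 i2) ?eqxx ?orbT 1?eq_sym //=.
rewrite big1 ?mulr1 // => i /andP[/andP[/orP[]-> //]]; by rewrite eqxx.
Qed.

Lemma prod_scalemx (R : comPzRingType) n (I : Type) (r : seq I) (c : I -> R)
    (B : I -> 'M[R]_n) :
  \prod_(i <- r) (c i *: B i) = (\prod_(i <- r) c i) *: \prod_(i <- r) B i.
Proof.
elim: r => [|i r IHr]; first by rewrite !big_nil scale1r.
by rewrite !big_cons IHr -!mulmxE -scalemxAl -scalemxAr scalerA.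
Qed.

Lemma prod_nat_two_marks (T : pzSemiRingType) (F : nat -> T) A i1 i2 K :
  (i1 < i2 < K)%N -> (forall k, k != i1 -> k != i2 -> F k = A) ->
  \prod_(0 <= k < K) F k = A ^+ i1 * F i1 * A ^+ (i2 - i1.+1) * F i2 * A ^+ (K - i2.+1).
Proof.
move=> /andP[lt_i12 lt_i2K] FA.
have const_range m n : (forall k, (m <= k < n)%N -> k != i1 /\ k != i2) ->
    \prod_(m <= k < n) F k = A ^+ (n - m).
  move=> unmarked; rewrite -prodr_const_nat; apply: eq_big_nat => k /unmarked[].
  exact: FA.
have lt_i1K := ltn_trans lt_i12 lt_i2K.
rewrite (big_cat_nat (leq0n i1) (ltnW lt_i1K)) (big_ltn lt_i1K) /=.
rewrite (big_cat_nat lt_i12 (ltnW lt_i2K)) (big_ltn lt_i2K) /= !mulrA.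
by rewrite !const_range ?subn0 // => k /andP[? ?]; split; apply/eqP; lia.
Qed.

Lemma iter_linear_eigen (S : pzRingType) (V : lmodType S) (f : {linear V -> V})
    (I : finType) (Y : I -> V) (lam c : I -> S) k :
  (forall i, f (Y i) = lam i *: Y i) ->
  iter k f (\sum_i c i *: Y i) = \sum_i (c i * lam i ^+ k) *: Y i.
Proof.
move=> fY; elim: k => [|k IHk] /=; first by under [RHS]eq_bigr do rewrite expr0 mulr1.
rewrite IHk linear_sum; apply: eq_bigr => i _.
by rewrite linearZ /= fY scalerA exprSr mulrA.
Qed.

Section BiorthogonalBasis.
Variables (F : fieldType) (n : nat).

Lemma mxvec_dot (A B : 'M[F]_n) : \sum_c mxvec A 0 c * mxvec B^T 0 c = \tr (B *m A).
Proof.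
rewrite (reindex (uncurry (@mxvec_index n n))) /=; last first.
  exact: onW_bij (onT_bij (curry_mxvec_bij n n)).
pose term a b := mxvec A 0 (mxvec_index a b) * mxvec B^T 0 (mxvec_index a b).
rewrite (eq_bigr (fun ab => term ab.1 ab.2)) => [|[a b] //].
rewrite -(pair_bigA _ term) /=.
rewrite exchange_big; apply: eq_bigr => b _; rewrite mxE; apply: eq_bigr => a _.
by rewrite /term !mxvecE !mxE mulrC.
Qed.

Lemma biorthogonal_basis (W Y : 'I_(n * n) -> 'M[F]_n) :
  (forall i j, \tr (W i *m Y j) = (i == j)%:R) ->
  forall X, X = \sum_j \tr (W j *m X) *: Y j.
Proof.
move=> WY X.
pose rowsY : 'M[F]_(n * n) := \matrix_(k, c) mxvec (Y k) 0 c.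
pose colsW : 'M[F]_(n * n) := \matrix_(c, j) mxvec (W j)^T 0 c.
have coord Z j : (mxvec Z *m colsW) 0 j = \tr (W j *m Z).
  by rewrite -mxvec_dot mxE; apply: eq_bigr => c _; rewrite mxE.
(* The family has n * n members, so this one-sided inverse is two-sided. *)
have /mulmx1C WY_inv : rowsY *m colsW = 1%:M.
  apply/matrixP => k j; rewrite !mxE eq_sym -(WY j k) -mxvec_dot.
  by apply: eq_bigr => c _; rewrite !mxE.
apply: (can_inj mxvecK); rewrite -[mxvec X]mulmx1 -WY_inv mulmxA mulmx_sum_row linear_sum.
apply: eq_bigr => j _; rewrite coord linearZ; congr (_ *: _).
by apply/rowP => c; rewrite !mxE.
Qed.

End BiorthogonalBasis.

Lemma sum_eigen_terms (R : realType) (I : finType) (i0 : I) (c b : I -> R[i])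
    (mu : I -> R) k :
  c i0 = 0 ->
  \sum_i c i * (mu i)%:C ^+ k * b i = \sum_(i | i != i0) c i * b i * (mu i ^+ k)%:C.
Proof.
move=> c_i0; rewrite (bigD1 i0) //= c_i0 !mul0r add0r.
by apply: eq_bigr => i _; rewrite rmorphXn mulrAC.
Qed.

Section RealComplexLimit.
Local Open Scope classical_set_scope.

Lemma cvg_complex_real (R : realType) (u : nat -> R) (l : R) : u @ \oo --> l ->
  (fun N => ((u N)%:C : (R[i])^o)) @ \oo --> ((l%:C : R[i]) : (R[i])^o).
Proof.
move=> /cvgrPdist_lt u_cvg; apply/cvgrPdist_lt => e e_gt0.
have [e_real e_re_gt0] : e = (complex.Re e)%:C /\ 0 < complex.Re e.
  by case: e e_gt0 => a b; rewrite ltcE /= => /andP[/eqP-> ->].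
have normcR (x : R) : `|x%:C| = `|x|%:C :> R[i].
  by rewrite normc_def /= expr0n addr0 sqrtr_sqr.
near=> N; rewrite e_real -rmorphB normcR ltcR.
by near: N; apply: u_cvg.
Unshelve. all: by end_near.
Qed.

End RealComplexLimit.

Section Adjoint.
Variable R : realType.
Local Open Scope sesquilinear_scope.

Lemma mxadjE m n (A : 'M[R[i]]_(m, n)) : mxadj A = A ^t*.
Proof. by apply/matrixP => i j; rewrite !mxE. Qed.

Lemma mxadjM m n p (A : 'M[R[i]]_(m, n)) (B : 'M[R[i]]_(n, p)) :
  mxadj (A *m B) = mxadj B *m mxadj A.
Proof. by rewrite !mxadjE trmx_mul map_mxM. Qed.

Lemma mxadjK m n (A : 'M[R[i]]_(m, n)) : mxadj (mxadj A) = A.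
Proof. by rewrite !mxadjE trmxCK. Qed.

Lemma mxadj1 n : mxadj (1%:M : 'M[R[i]]_n) = 1%:M.
Proof. by rewrite mxadjE trmx1 map_mx1. Qed.

Lemma mxtrace_adj n (A : 'M[R[i]]_n) : \tr (mxadj A) = (\tr A)^*%R.
Proof. by rewrite rmorph_sum; apply: eq_bigr => i _; rewrite mxE. Qed.

Lemma mxtrace_mul_delta n (A : 'M[R[i]]_n) i j : \tr (A *m delta_mx j i) = A i j.
Proof.
rewrite /mxtrace (bigD1 i) //= big1 => [|k /negbTE nki]; last first.
  by rewrite mxE big1 // => l _; rewrite mxE nki andbF mulr0.
rewrite addr0 mxE (bigD1 j) //= big1 => [|k /negbTE nkj]; last by rewrite mxE nkj mulr0.
by rewrite !mxE !eqxx mulr1 addr0.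
Qed.

Lemma mxtrace_mul_inj n (A B : 'M[R[i]]_n) :
  (forall X, \tr (A *m X) = \tr (B *m X)) -> A = B.
Proof. by move=> eqAB; apply/matrixP => i j; rewrite -!(mxtrace_mul_delta _ i j). Qed.

End Adjoint.

Section UnitaryDiag.
Local Open Scope classical_set_scope.
Variables (R : realType) (d : nat) (U : 'M[R[i]]_d).
Hypothesis U_unitary : U \is unitarymx.

Let mulmx_adjr : U *m mxadj U = 1%:M.
Proof. by rewrite mxadjE; apply/unitarymxP. Qed.

Let mulmx_adjl : mxadj U *m U = 1%:M.
Proof. exact: mulmx1C. Qed.

Definition udiag (f : 'I_d -> R) : 'M[R[i]]_d :=
  mxadj U *m diag_mx (\row_l (f l)%:C) *m U.

Lemma udiagE f i j : udiag f i j = \sum_l mxadj U i l * (f l)%:C * U l j.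
Proof. by rewrite mxE; apply: eq_bigr => l _; rewrite mul_mx_diag !mxE. Qed.

Lemma udiagM f g : udiag f *m udiag g = udiag (fun l => f l * g l).
Proof.
rewrite /udiag !mulmxA -[_ *m U *m mxadj U]mulmxA mulmx_adjr mulmx1.
rewrite -[mxadj U *m _ *m _]mulmxA mulmx_diag.
by congr (_ *m diag_mx _ *m _); apply/rowP => l; rewrite !mxE rmorphM.
Qed.

Lemma udiag1 : udiag (fun=> 1) = 1%:M.
Proof.
rewrite /udiag (_ : \row_l _ = const_mx 1); last by apply/rowP => l; rewrite !mxE.
by rewrite diag_const_mx mulmx1.
Qed.

Lemma udiagZ c f : c%:C *: udiag f = udiag (fun l => c * f l).
Proof.
rewrite /udiag scalemxAl scalemxAr -linearZ /=.
by congr (_ *m diag_mx _ *m _); apply/rowP => l; rewrite !mxE rmorphM.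
Qed.

Lemma udiag_sum (I : Type) (s : seq I) (F : I -> 'I_d -> R) :
  udiag (fun l => \sum_(k <- s) F k l) = \sum_(k <- s) udiag (F k).
Proof.
rewrite /udiag -mulmx_suml -mulmx_sumr -linear_sum /=.
by congr (_ *m diag_mx _ *m _); apply/rowP => l; rewrite !mxE summxE rmorph_sum;
   apply: eq_bigr => k _; rewrite mxE.
Qed.

Lemma mxpow_udiag f k : mxpow (udiag f) k = udiag (fun l => f l ^+ k).
Proof.
elim: k => [|k IHk]; first by rewrite [mxpow _ 0]/= -udiag1.
by rewrite /mxpow iterS -/(mxpow _ _) IHk udiagM; congr udiag; apply: funext => l; rewrite exprS.
Qed.

Lemma mxadj_udiag f : mxadj (udiag f) = udiag f.
Proof.
rewrite /udiag !mxadjM mxadjK mulmxA; congr (_ *m _ *m _).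
by rewrite mxadjE tr_diag_mx map_diag_mx; congr diag_mx; apply/rowP => l; rewrite !mxE; exact: conjc_real.
Qed.

Lemma mxtrace_udiag f : \tr (udiag f) = (\sum_l f l)%:C.
Proof.
rewrite /udiag mxtrace_mulC mulmxA mulmx_adjr mul1mx mxtrace_diag rmorph_sum.
by apply: eq_bigr => l _; rewrite mxE.
Qed.

Lemma expm_udiag f : expm (udiag f) = udiag (fun l => expR (f l)).
Proof.
have limnE (u : nat -> (R[i])^o) l : u @ \oo --> l -> limn u = l.
  by move=> u_cvg; apply: cvg_lim u_cvg; exact: norm_hausdorff.
apply/matrixP => i j; rewrite mxE udiagE; apply: limnE.
have partial_sum N : (\sum_(k < N) (k`!%:R)^-1 *: mxpow (udiag f) k) i j
    = \sum_l mxadj U i l * (series (exp_coeff (f l)) N)%:C * U l j.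
  have invfact_real k : ((k`!%:R)^-1 : R[i]) = ((k`!%:R)^-1 : R)%:C.
    by rewrite fmorphV rmorph_nat.
  under eq_bigr do rewrite mxpow_udiag invfact_real udiagZ.
  rewrite -udiag_sum udiagE; apply: eq_bigr => l _.
  by rewrite /series /= big_mkord exp_coeffE.
under eq_fun do rewrite partial_sum.
apply: (@cvg_big _ _ +%R 0 xpredT add_continuous) => // l _.
apply: cvgMl; apply: cvgMr; apply: cvg_complex_real.
exact: is_cvg_series_exp_coeff.
Qed.

End UnitaryDiag.

Section Channels.
Variables (R : realType) (d : nat).
Implicit Types X B : 'M[R[i]]_d.

Lemma kraus_is_linear a (K : 'I_a -> 'M[R[i]]_d) : linear (kraus K).
Proof.
move=> c X Y; rewrite /kraus scaler_sumr -big_split; apply: eq_bigr => u _.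
by rewrite mulmxDr mulmxDl -scalemxAr -scalemxAl.
Qed.

Lemma kraus_adj_is_linear a (K : 'I_a -> 'M[R[i]]_d) : linear (kraus_adj K).
Proof.
move=> c X Y; rewrite /kraus_adj scaler_sumr -big_split; apply: eq_bigr => u _.
by rewrite mulmxDr mulmxDl -scalemxAr -scalemxAl.
Qed.

Lemma Mhat_adj_is_linear m (O : 'I_m -> 'M[R[i]]_d) lab v : linear (Mhat_adj O lab v).
Proof.
move=> c X Y; rewrite /Mhat_adj scaler_sumr -big_split; apply: eq_bigr => u _.
by rewrite mulmxDr mulmxDl -scalemxAr -scalemxAl scalerDr !scalerA mulrC.
Qed.

End Channels.

HB.instance Definition _ (R : realType) (d a : nat) (K : 'I_a -> 'M[R[i]]_d) :=
  GRing.isLinear.Build R[i] 'M[R[i]]_d 'M[R[i]]_d *:%R (kraus K) (kraus_is_linear K).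
HB.instance Definition _ (R : realType) (d a : nat) (K : 'I_a -> 'M[R[i]]_d) :=
  GRing.isLinear.Build R[i] 'M[R[i]]_d 'M[R[i]]_d *:%R (kraus_adj K) (kraus_adj_is_linear K).
HB.instance Definition _ (R : realType) (d m : nat) (O : 'I_m -> 'M[R[i]]_d) lab v :=
  GRing.isLinear.Build R[i] 'M[R[i]]_d 'M[R[i]]_d *:%R (Mhat_adj O lab v)
    (Mhat_adj_is_linear O lab v).

Section ChannelTrace.
Variables (R : realType) (d a : nat) (K : 'I_a -> 'M[R[i]]_d).
Implicit Types X B : 'M[R[i]]_d.

Lemma mxtrace_kraus_dual X B : \tr (kraus K X *m B) = \tr (X *m kraus_adj K B).
Proof.
rewrite mulmx_suml mulmx_sumr !raddf_sum; apply: eq_bigr => u _ /=.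
by rewrite -!mulmxA mxtrace_mulC !mulmxA.
Qed.

Hypothesis K_tp : trace_preserving K.

Lemma kraus_adj1 : kraus_adj K 1%:M = 1%:M.
Proof. by rewrite -[RHS]K_tp; apply: eq_bigr => u _; rewrite mulmx1. Qed.

Lemma mxtrace_kraus X : \tr (kraus K X) = \tr X.
Proof. by rewrite -[kraus K X]mulmx1 mxtrace_kraus_dual kraus_adj1 mulmx1. Qed.

End ChannelTrace.

Lemma traj_step_is_linear (R : realType) (d a m : nat) (KN : 'I_a -> 'M[R[i]]_d)
    (O : 'I_m -> 'M[R[i]]_d) e :
  linear (traj_step KN O e).
Proof. by move=> c X Y; rewrite /traj_step mulmxDr mulmxDl -scalemxAr -scalemxAl !linearP. Qed.

HB.instance Definition _ (R : realType) (d a m : nat) (KN : 'I_a -> 'M[R[i]]_d)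
    (O : 'I_m -> 'M[R[i]]_d) e :=
  GRing.isLinear.Build R[i] 'M[R[i]]_d 'M[R[i]]_d *:%R (traj_step KN O e)
    (traj_step_is_linear KN O e).

Section Gibbs.
Variables (R : realType) (d : nat) (H : 'M[R[i]]_d) (beta : R).
Hypotheses (H_herm : herm_mx H) (d_gt0 : (0 < d)%N).

Let U := spectralmx H.
Let U_unitary : U \is unitarymx := spectral_unitarymx H.
Let r l := complex.Re (spectral_diag H 0 l).
Let Z := \sum_l expR (- beta * r l).

Let H_udiag : H = udiag U r.
Proof.
have H_hermsym : H \is hermsymmx.
  by apply/is_hermitianmxP; rewrite expr0 scale1r -mxadjE H_herm.
have /orthomx_spectralP H_spectral := hermitian_normalmx H_hermsym.
rewrite [LHS]H_spectral (invmx_unitary (spectral_unitarymx H)) -mxadjE.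
congr (_ *m diag_mx _ *m _).
apply/rowP => l; rewrite mxE /r RRe_real //.
by move/mxOverP: (hermitian_spectral_diag_real H_hermsym); apply.
Qed.

Let expm_scaleH c : expm (c%:C *: H) = udiag U (fun l => expR (c * r l)).
Proof. by rewrite {1}H_udiag udiagZ (expm_udiag U_unitary). Qed.

Let Z_gt0 : 0 < Z.
Proof.
rewrite /Z (bigD1 (Ordinal d_gt0)) //= ltr_pwDl ?expR_gt0 //.
by apply: sumr_ge0 => l _; apply: ltW; apply: expR_gt0.
Qed.

Let gibbsZE : gibbsZ H beta = Z%:C.
Proof. by rewrite /gibbsZ -rmorphN expm_scaleH (mxtrace_udiag U_unitary). Qed.

Let gibbs_udiag : gibbs H beta = udiag U (fun l => Z^-1 * expR (- beta * r l)).
Proof. by rewrite /gibbs -rmorphN expm_scaleH gibbsZE -fmorphV udiagZ. Qed.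

Let gibbs_pow_udiag s :
  gibbs_pow H beta s = udiag U (fun l => (Z `^ s)^-1 * expR (- (s * beta) * r l)).
Proof. by rewrite /gibbs_pow gibbsZE -rmorphN expm_scaleH udiagZ. Qed.

Lemma gibbs_powM s : gibbs_pow H beta s *m gibbs_pow H beta (1 - s) = gibbs H beta.
Proof.
have s_add : s + (1 - s) = 1 by rewrite addrC subrK.
rewrite !gibbs_pow_udiag gibbs_udiag (udiagM U_unitary); congr udiag; apply: funext => l.
rewrite mulrACA -invfM -powRD; last by rewrite s_add oner_eq0.
by rewrite s_add powRr1 ?ltW // -expRD -mulrDl -opprD -mulrDl s_add mul1r.
Qed.

Lemma mxadj_gibbs : mxadj (gibbs H beta) = gibbs H beta.
Proof. by rewrite gibbs_udiag mxadj_udiag. Qed.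

Lemma mxtrace_gibbs : \tr (gibbs H beta) = 1.
Proof.
by rewrite gibbs_udiag (mxtrace_udiag U_unitary) -mulr_sumr mulVf ?gt_eqF.
Qed.

Variable s : R.

Lemma ip_sE A X :
  ip_s H beta s A X = \tr (gibbs_pow H beta s *m mxadj A *m gibbs_pow H beta (1 - s) *m X).
Proof. by rewrite /ip_s mxtrace_mulC !mulmxA. Qed.

Lemma ip_s_basis (Y : 'I_(d * d) -> 'M[R[i]]_d) :
  (forall i j, ip_s H beta s (Y i) (Y j) = (i == j)%:R) ->
  forall X, X = \sum_j ip_s H beta s (Y j) X *: Y j.
Proof.
move=> Y_orth X; under eq_bigr do rewrite ip_sE.
apply: (biorthogonal_basis
  (W := fun j => gibbs_pow H beta s *m mxadj (Y j) *m gibbs_pow H beta (1 - s))).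
by move=> i j; rewrite -ip_sE.
Qed.

Lemma ip_s1l X : ip_s H beta s 1%:M X = \tr (gibbs H beta *m X).
Proof.
(* Generalising the Gibbs factors keeps [mul1mx] from trying to unify them
   with other products, which would unfold [expm]. *)
rewrite /ip_s -(gibbs_powM s); move: (gibbs_pow _ _ _) (gibbs_pow _ _ _) => A B.
by rewrite mxadj1 mul1mx mxtrace_mulC mulmxA.
Qed.

Lemma detailed_balance_kraus_gibbs a (K : 'I_a -> 'M[R[i]]_d) :
  trace_preserving K -> detailed_balance H beta s (kraus_adj K) ->
  kraus K (gibbs H beta) = gibbs H beta.
Proof.
move=> K_tp K_db; apply: mxtrace_mul_inj => X.
by rewrite mxtrace_kraus_dual -ip_s1l K_db kraus_adj1 // ip_s1l.
Qed.

End Gibbs.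

Section Trajectory.
Variables (R : realType) (d a m : nat) (KN : 'I_a -> 'M[R[i]]_d) (O : 'I_m -> 'M[R[i]]_d).
Variables (lab : 'I_m -> R) (v : R[i]).
Implicit Types X rho : 'M[R[i]]_d.

(* Rounds act on [mxvec] by right multiplication, so that the sum over outcome
   records factorises by [bigA_distr_bigA]. *)
Definition step_mx e : 'M[R[i]]_(d * d) := lin_mx (traj_step KN O e).

Definition weighted_step_mx (c : 'I_m -> R[i]) := \sum_e c e *: step_mx e.

Definition Echan X := kraus O (kraus KN (kraus O X)).

Definition Mhat X := \sum_u ((lab u)%:C - v) *: (O u *m X *m mxadj (O u)).

Definition Ehat X := kraus O (kraus KN (Mhat X)).

Lemma mxvec_traj es X : mxvec (traj KN O es X) = mxvec X *m \prod_(e <- es) step_mx e.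
Proof.
elim: es X => [|e es IHes] X; first by rewrite big_nil -idmxE mulmx1.
by rewrite big_cons /traj /= -/(traj KN O es _) IHes -mulmxE mulmxA mul_vec_lin.
Qed.

Lemma mxvec_weighted_step c X :
  mxvec X *m weighted_step_mx c = mxvec (\sum_e c e *: traj_step KN O e X).
Proof.
rewrite mulmx_sumr linear_sum; apply: eq_bigr => e _.
by rewrite -scalemxAr mul_vec_lin linearZ.
Qed.

Lemma mxvec_Echan X : mxvec X *m weighted_step_mx (fun=> 1) = mxvec (Echan X).
Proof.
rewrite mxvec_weighted_step /Echan [kraus O X]/kraus; congr mxvec.
by rewrite [kraus KN _]linear_sum linear_sum; apply: eq_bigr => e _; rewrite scale1r.
Qed.

Lemma mxvec_Echan_pow k X :
  mxvec X *m weighted_step_mx (fun=> 1) ^+ k = mxvec (iter k Echan X).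
Proof.
elim: k X => [|k IHk] X; first by rewrite expr0 -idmxE mulmx1.
by rewrite exprS -mulmxE mulmxA mxvec_Echan IHk -iterSr.
Qed.

Lemma mxvec_Ehat X :
  mxvec X *m weighted_step_mx (fun e => (lab e)%:C - v) = mxvec (Ehat X).
Proof.
rewrite mxvec_weighted_step /Ehat /Mhat; congr mxvec.
rewrite [kraus KN _]linear_sum linear_sum; apply: eq_bigr => e _.
by rewrite /traj_step -2!linearZ.
Qed.

(* Records are 0-indexed: rounds t and t + p are positions t.-1 and (t + p).-1. *)
Lemma corr_weighted_product rho K t p : (0 < t)%N -> (0 < p)%N -> (t + p <= K)%N ->
  corr KN O lab rho v K t p = \tr (vec_mx (mxvec rho *m \prod_(0 <= k < K)
    weighted_step_mx (fun e => if (k == t.-1) || (k == (t + p).-1) then (lab e)%:C - v else 1))).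
Proof.
move=> t_gt0 p_gt0 tpK.
have [lt_i1K lt_i2K] : (t.-1 < K)%N /\ ((t + p).-1 < K)%N by split; lia.
pose i1 := Ordinal lt_i1K; pose i2 := Ordinal lt_i2K.
have i12 : i1 != i2 by rewrite -val_eqE /=; apply/eqP; lia.
rewrite big_mkord /weighted_step_mx bigA_distr_bigA mulmx_sumr !raddf_sum /corr.
apply: eq_bigr => f _ /=.
rewrite prod_scalemx.
have -> : \prod_(i < K) step_mx (f i) = \prod_(e <- [seq f i | i <- enum 'I_K]) step_mx e.
  by rewrite big_map enumT [index_enum _]unlock.
rewrite -scalemxAr !linearZ /= -mxvec_traj mxvecK; congr (_ * _).
have lab_nth (i : 'I_K) : [seq lab e | e <- [seq f i | i <- enum 'I_K]]`_i = lab (f i).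
  by rewrite -map_comp (nth_map i) ?size_enum_ord // nth_ord_enum.
rewrite (lab_nth i1) (lab_nth i2) -(prod_pred2_if (fun i => (lab (f i))%:C - v) i12).
by apply: eq_bigr => i _; rewrite -!val_eqE.
Qed.

Lemma mxtrace_iter_Echan k X : trace_preserving KN -> trace_preserving O ->
  \tr (iter k Echan X) = \tr X.
Proof.
move=> KN_tp O_tp; elim: k => //= k IHk.
by rewrite /Echan !mxtrace_kraus.
Qed.

Lemma corrE rho K t p : (0 < t)%N -> (0 < p)%N -> (t + p <= K)%N ->
  trace_preserving KN -> trace_preserving O -> Echan rho = rho ->
  corr KN O lab rho v K t p = \tr (Ehat (iter p.-1 Echan (Ehat rho))).
Proof.
move=> t_gt0 p_gt0 tpK KN_tp O_tp rho_fix.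
rewrite corr_weighted_product // (@prod_nat_two_marks _ _ (weighted_step_mx (fun=> 1))
    t.-1 (t + p).-1); last 2 first.
- by apply/andP; split; lia.
- by move=> k k1 k2; rewrite (negbTE k1) (negbTE k2).
rewrite !eqxx orbT /= (_ : (t + p).-1 - t.-1.+1 = p.-1)%N; last by lia.
rewrite -!mulmxE !mulmxA mxvec_Echan_pow iter_fix // mxvec_Ehat mxvec_Echan_pow mxvec_Ehat.
by rewrite mxvec_Echan_pow mxvecK mxtrace_iter_Echan.
Qed.

End Trajectory.

Section Heisenberg.
Variables (R : realType) (d a m : nat) (KN : 'I_a -> 'M[R[i]]_d) (O : 'I_m -> 'M[R[i]]_d).
Variables (lab : 'I_m -> R) (v : R[i]).
Implicit Types X B rho : 'M[R[i]]_d.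

Definition Eadj := kraus_adj O \o kraus_adj KN \o kraus_adj O.
HB.instance Definition _ := GRing.Linear.copy Eadj (kraus_adj O \o kraus_adj KN \o kraus_adj O).

Definition Ehat_adj := Mhat_adj O lab v \o kraus_adj KN \o kraus_adj O.
HB.instance Definition _ :=
  GRing.Linear.copy Ehat_adj (Mhat_adj O lab v \o kraus_adj KN \o kraus_adj O).

Lemma mxtrace_Echan_dual X B : \tr (Echan KN O X *m B) = \tr (X *m Eadj B).
Proof. by rewrite /Echan !mxtrace_kraus_dual. Qed.

Lemma mxtrace_iter_Echan_dual k X B :
  \tr (iter k (Echan KN O) X *m B) = \tr (X *m iter k Eadj B).
Proof.
elim: k B => [//|k IHk] B.
rewrite [in RHS]iterSr -IHk; exact: mxtrace_Echan_dual.
Qed.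

Hypothesis v_real : v \is Num.real.

Lemma mxtrace_Mhat_dual X B : \tr (Mhat O lab v X *m B) = \tr (X *m Mhat_adj O lab v B).
Proof.
rewrite mulmx_suml mulmx_sumr !raddf_sum; apply: eq_bigr => u _ /=.
rewrite conj_Creal ?rpredB //; last by apply/complex_realP; exists (lab u).
rewrite -scalemxAl -scalemxAr !mxtraceZ.
by rewrite -!mulmxA mxtrace_mulC !mulmxA.
Qed.

Lemma mxtrace_Ehat_dual X B : \tr (Ehat KN O lab v X *m B) = \tr (X *m Ehat_adj B).
Proof. by rewrite /Ehat !mxtrace_kraus_dual mxtrace_Mhat_dual. Qed.

Lemma mxtrace_Mhat_adj1 rho : trace_preserving O -> \tr rho = 1 -> v = expM O lab rho ->
  \tr (rho *m Mhat_adj O lab v 1%:M) = 0.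
Proof.
move=> O_tp rho_tr1 vE; rewrite -mxtrace_Mhat_dual mulmx1 raddf_sum /=.
under eq_bigr do rewrite mxtraceZ mulrBl.
rewrite sumrB -/(expM O lab rho) -vE -mulr_sumr -raddf_sum /= -/(kraus O rho).
by rewrite mxtrace_kraus // rho_tr1 mulr1 subrr.
Qed.

End Heisenberg.

Lemma expM_real (R : realType) (d m : nat) (O : 'I_m -> 'M[R[i]]_d) lab rho :
  mxadj rho = rho -> expM O lab rho \is Num.real.
Proof.
move=> rho_herm; apply/CrealP; rewrite rmorph_sum; apply: eq_bigr => u _.
rewrite rmorphM /= conj_Creal; last by apply/complex_realP; exists (lab u).
by rewrite -mxtrace_adj !mxadjM mxadjK rho_herm mulmxA.
Qed.

Unset Implicit Arguments.
Set Strict Implicit.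

Theorem lemma5p9 (R : realType) (n : nat)
  (H : 'M[R[i]]_(qdim n)) (beta s : R)
  (a : nat) (KN : 'I_a -> 'M[R[i]]_(qdim n))
  (m : nat) (O : 'I_m -> 'M[R[i]]_(qdim n)) (lab : 'I_m -> R)
  (Y : 'I_(qdim n * qdim n) -> 'M[R[i]]_(qdim n)) (lam : 'I_(qdim n * qdim n) -> R)
  (K t p : nat) :
  herm_mx H -> 0 < beta -> 0 <= s <= 1 ->
  (* N: quantum channel, s-detailed balance, unique fixed state rho_beta, spectrum in [0,1] *)
  trace_preserving KN ->
  detailed_balance H beta s (kraus_adj KN) ->
  kraus KN (gibbs H beta) = gibbs H beta ->
  (forall X, density X -> kraus KN X = X -> X = gibbs H beta) ->
  (forall (z : R[i]) (X : 'M[R[i]]_(qdim n)), X != 0 -> kraus KN X = z *: X -> 0 <= z <= 1) ->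
  (* M: quantum channel with Kraus operators indexed by distinct real outcomes, s-detailed balance *)
  injective lab ->
  trace_preserving O ->
  detailed_balance H beta s (kraus_adj O) ->
  (* {Y_i}: <.,.>_s-orthonormal eigenbasis of E^dag = M^dag N^dag M^dag *)
  (forall i j, ip_s H beta s (Y i) (Y j) = (i == j)%:R) ->
  (forall i, kraus_adj O (kraus_adj KN (kraus_adj O (Y i))) = (lam i)%:C *: Y i) ->
  lam (idx0 n) = 1 ->
  (forall i, i != idx0 n -> lam i < 1) ->
  (forall i j : 'I_(qdim n * qdim n), (i <= j)%N -> lam j <= lam i) ->
  (forall i, 0 <= lam i) ->
  Y (idx0 n) = 1%:M ->
  (0 < t)%N -> (0 < p)%N -> (t + p <= K)%N ->
  let v := expM O lab (gibbs H beta) in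
  let alpha i j := ip_s H beta s (Y j)
                     (Mhat_adj O lab v (kraus_adj KN (kraus_adj O (Y i)))) in
  corr KN O lab (gibbs H beta) v K t p =
  \sum_(j < qdim n * qdim n | j != idx0 n)
     alpha (idx0 n) j * alpha j (idx0 n) * ((lam j) ^+ p.-1)%:C.
Proof.
move=> H_herm _ _ KN_tp _ KN_fix _ _ _ O_tp O_db Y_orth Y_eig _ _ _ _ Y1 t_gt0 p_gt0 tpK v alpha.
rewrite {}/alpha.
have d_gt0 : (0 < qdim n)%N by rewrite expn_gt0.
have O_fix := detailed_balance_kraus_gibbs H_herm d_gt0 O_tp O_db.
have E_fix : Echan KN O (gibbs H beta) = gibbs H beta by rewrite /Echan O_fix KN_fix O_fix.
have v_real : v \is Num.real := expM_real O lab (mxadj_gibbs beta H_herm).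
have alpha11 : ip_s H beta s (Y (idx0 n)) (Ehat_adj KN O lab v (Y (idx0 n))) = 0.
  rewrite Y1 ip_s1l // /Ehat_adj /= !kraus_adj1 //.
  exact: (mxtrace_Mhat_adj1 v_real O_tp (mxtrace_gibbs beta H_herm d_gt0)).
have := iter_linear_eigen (f := Eadj KN O : {linear _ -> _})
  (fun j => ip_s H beta s (Y j) (Ehat_adj KN O lab v 1%:M)) p.-1 Y_eig.
rewrite -(ip_s_basis Y_orth) => Heisenberg_expansion.
rewrite (corrE lab v t_gt0 p_gt0 tpK KN_tp O_tp E_fix) -[X in \tr X]mulmx1.
rewrite (mxtrace_Ehat_dual KN O lab v_real) mxtrace_iter_Echan_dual.
rewrite (mxtrace_Ehat_dual KN O lab v_real) Heisenberg_expansion.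
rewrite [Ehat_adj _ _ _ _ (\sum_i _)]linear_sum mulmx_sumr raddf_sum.
under eq_bigr do rewrite linearZ /= -scalemxAr mxtraceZ -(ip_s1l beta H_herm d_gt0 s) -Y1.
exact: sum_eigen_terms.
Qed.
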